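(* Let $(\mathcal C,S,T)$ be a semi-thin association schemoid. For any $\alpha,\beta,\gamma\in S_0$, $\sigma\in{}_\alpha S_\beta$ and $\tau\in{}_\beta S_\gamma$, there exists a unique $\mu\in{}_\alpha S_\gamma$ such that $p^\mu_{\tau\sigma}=1$; moreover $p^{\mu'}_{\tau\sigma}=0$ for every $\mu'\in S$ with $\mu'\neq\mu$.
   Context: Write $s(f),t(f)$ for source and target. A quasi-schemoid is a pair $(\mathcal C,S)$ with $\mathcal C$ a small category and $S$ a partition of $mor(\mathcal C)$ into nonempty blocks such that for all $\sigma,\tau,\mu\in S$ and $f,g\in\mu$ the sets $\{(a,b)\in\sigma\times\tau: s(a)=t(b), a\circ b=f\}$ and the analogous set for $g$ have equal cardinality, denoted $p^\mu_{\sigma\tau}$. An association schemoid is a triple $(\mathcal C,S,T)$ where $(\mathcal C,S)$ is a quasi-schemoid, every block containing an endomorphism consists only of endomorphisms, and $T:\mathcal C\to\mathcal C$ is a contravariant functor with $T^2=\mathrm{id}$ and $\{T(f):f\in\sigma\}\in S$ for all $\sigma\in S$. With $J_0=\{1_x\}$, it is unital if every block meeting $J_0$ lies in $J_0$. A unital association schemoid is semi-thin if (i) $\#\{f\in\sigma: s(f)=x\}\le 1$ for all $\sigma\in S$, $x\in ob(\mathcal C)$, and (ii) $\mathcal C$ is a groupoid and $T(f)=f^{-1}$ for all morphisms $f$. $S_0=\{\alpha\in S:\alpha\cap J_0\neq\emptyset\}$, and for $\alpha,\beta\in S_0$, ${}_\alpha S_\beta=\{\sigma\in S: p^\sigma_{\sigma\alpha}=p^\sigma_{\beta\sigma}=1\}$.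 *)

Set Implicit Arguments.

(** A small category, presented by its type of objects, type of morphisms,
    source/target maps, identities and a composition [comp a b = a o b],
    which is only meaningful when [src a = tgt b]. *)
Unset Implicit Arguments.
Record category := Category {
  Obj : Type;
  Mor : Type;
  src : Mor -> Obj;
  tgt : Mor -> Obj;
  idm : Obj -> Mor;
  comp : Mor -> Mor -> Mor;
  src_id : forall x, src (idm x) = x;
  tgt_id : forall x, tgt (idm x) = x;
  src_comp : forall a b, src a = tgt b -> src (comp a b) = src b;
  tgt_comp : forall a b, src a = tgt b -> tgt (comp a b) = tgt a;
  comp_id_r : forall f, comp f (idm (src f)) = f;
  comp_id_l : forall f, comp (idm (tgt f)) f = f;
  comp_assoc : forall a b c, src a = tgt b -> src b = tgt c ->
      comp a (comp b c) = comp (comp a b) c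
}.

Arguments src {c0} _.
Arguments tgt {c0} _.
Arguments idm {c0} _.
Arguments comp {c0} _ _.
Set Implicit Arguments.

Definition equinum (X Y : Type) (A : X -> Prop) (B : Y -> Prop) : Prop :=
  exists (h : {x | A x} -> {y | B y}) (k : {y | B y} -> {x | A x}),
    (forall u, k (h u) = u) /\ (forall v, h (k v) = v).

Definition has_card (X : Type) (A : X -> Prop) (n : nat) : Prop :=
  equinum A (fun i : nat => i < n).

(** A partition S of mor(C) into nonempty blocks is encoded by a type [Blk]
    of blocks and the surjective map [cls] sending a morphism to its block;
    "f \in sigma" means [cls f = sigma]. *)
Section Pairs.
Variables (C : category) (Blk : Type) (cls : Mor C -> Blk).

Definition pairs (sigma tau : Blk) (f : Mor C) : Mor C * Mor C -> Prop :=
  fun p => cls (fst p) = sigma /\ cls (snd p) = tau /\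
           src (fst p) = tgt (snd p) /\ comp (fst p) (snd p) = f.
End Pairs.

Record assoc_schemoid (C : category) := AssocSchemoid {
  Blk : Type;
  cls : Mor C -> Blk;
  cls_surj : forall sigma : Blk, exists f, cls f = sigma;
  qs_cond : forall sigma tau mu f g, cls f = mu -> cls g = mu ->
      equinum (@pairs C Blk cls sigma tau f) (@pairs C Blk cls sigma tau g);
  endo_cond : forall f g, cls f = cls g -> src f = tgt f -> src g = tgt g;
  To : Obj C -> Obj C;
  Tm : Mor C -> Mor C;
  T_src : forall f, src (Tm f) = To (tgt f);
  T_tgt : forall f, tgt (Tm f) = To (src f);
  T_id : forall x, Tm (idm x) = idm (To x);
  T_comp : forall a b, src a = tgt b -> Tm (comp a b) = comp (Tm b) (Tm a);
  To_inv : forall x, To (To x) = x;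
  Tm_inv : forall f, Tm (Tm f) = f;
  T_block : forall sigma : Blk, exists tau : Blk,
      forall g, cls g = tau <-> exists f, cls f = sigma /\ g = Tm f
}.

Section SchemoidNotions.
Variables (C : category) (A : assoc_schemoid C).

(** p^mu_{sigma tau} = n  (well defined by the quasi-schemoid condition) *)
Definition pconst (mu sigma tau : Blk A) (n : nat) : Prop :=
  forall f, cls A f = mu -> has_card (@pairs C (Blk A) (cls A) sigma tau f) n.

Definition unital : Prop :=
  forall x g, cls A g = cls A (idm x) -> exists y, g = idm y.

Definition semi_thin : Prop :=
  unital /\
  (forall sigma x f g, cls A f = sigma -> cls A g = sigma ->
      src f = x -> src g = x -> f = g) /\
  (forall f : Mor C, exists g, comp g f = idm (src f) /\ comp f g = idm (tgt f)) /\
  (forall f, comp (Tm A f) f = idm (src f) /\ comp f (Tm A f) = idm (tgt f)).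

Definition in_S0 (alpha : Blk A) : Prop := exists x, cls A (idm x) = alpha.

Definition in_SS (alpha beta sigma : Blk A) : Prop :=
  pconst sigma sigma alpha 1 /\ pconst sigma beta sigma 1.
End SchemoidNotions.

From Stdlib Require Import ProofIrrelevance Lia.
Set Implicit Arguments.

(** In a semi-thin schemoid every block [sigma] in [_alpha S_beta] consists of
    morphisms from objects of "type" alpha to objects of "type" beta, and two
    composable pairs through the same blocks with the same source coincide.
    Given [sigma] in [_alpha S_beta] and [tau] in [_beta S_gamma], we pick
    [h] in [sigma] and translate [tau] along the object [tgt h] to get a
    composable [a] in [tau]; the candidate is [mu := cls (a o h)].
    The central fact is that EVERY composite [a' o b'] with [a'] in [tau] and
    [b'] in [sigma] lies in [mu] (translate [mu] to [src b'] and compare the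
    transported factorization with [(a', b')]).  From it: [p^mu_{tau sigma}=1]
    by thinness, [mu] lies in [_alpha S_gamma], any [mu'] with
    [p^mu'_{tau sigma} = 1] equals [mu], and every other block has
    [p^mu'_{tau sigma} = 0]. *)

Lemma has_card_one_intro {X : Type} {P : X -> Prop} {x0 : X} :
  P x0 -> (forall y, P y -> y = x0) -> has_card P 1.
Proof.
  intros Hx0 Huniq.
  exists (fun _ => exist (fun i : nat => i < 1) 0 (le_n 1)).
  exists (fun _ => exist P x0 Hx0).
  split.
  - intros [x Hx]. destruct (Huniq x Hx). f_equal. apply proof_irrelevance.
  - intros [i Hi]. assert (i = 0) by lia. subst. f_equal. apply proof_irrelevance.
Qed.

Lemma has_card_one_elim {X : Type} {P : X -> Prop} :
  has_card P 1 -> exists x, P x /\ forall y, P y -> y = x.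
Proof.
  intros [h [k [hK _]]].
  exists (proj1_sig (k (exist _ 0 (le_n 1)))). split.
  - apply (proj2_sig (k _)).
  - intros y Py.
    assert (Hh : h (exist _ y Py) = exist (fun i => i < 1) 0 (le_n 1)).
    { destruct (h (exist _ y Py)) as [i Hi]. assert (i = 0) by lia. subst.
      f_equal. apply proof_irrelevance. }
    rewrite <- Hh, hK. reflexivity.
Qed.

Lemma has_card_zero_intro {X : Type} {P : X -> Prop} :
  (forall x, ~ P x) -> has_card P 0.
Proof.
  intros Hempty.
  exists (fun u => match Hempty _ (proj2_sig u) with end).
  exists (fun v => match PeanoNat.Nat.nlt_0_r _ (proj2_sig v) with end).
  split; [intros [x Hx]; destruct (Hempty x Hx) | intros [i Hi]; lia].
Qed.

Section SemiThin.
Context {C : category} {A : assoc_schemoid C}.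

Lemma pairs_transfer (s t : Blk A) (f : Mor C) {f' : Mor C} (p : Mor C * Mor C) :
  pairs C (cls A) s t f p -> cls A f' = cls A f ->
  exists q, pairs C (cls A) s t f' q.
Proof.
  intros Hp Hf.
  destruct (qs_cond A s t f f' eq_refl Hf) as [h _].
  destruct (h (exist _ p Hp)) as [q Hq]. eauto.
Qed.

Hypothesis Hst : semi_thin A.

(** [T] fixes every object, since [T f] is a two-sided inverse of [f]. *)
Lemma To_fixes (x : Obj C) : To A x = x.
Proof.
  destruct Hst as [_ [_ [_ Hinv]]].
  destruct (Hinv (idm x)) as [_ Hright].
  destruct (Hinv (Tm A (idm x))) as [Hleft _].
  rewrite Tm_inv, Hright, T_src, tgt_id in Hleft.
  apply (f_equal (@src C)) in Hleft. rewrite !src_id in Hleft. now symmetry.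
Qed.

(** Translation: if [1_x] and [1_{src g}] lie in the same block, then the
    block of [g] has a member with source [x].  The pair [(T g, g)] factors
    [1_{src g}]; transport it to [1_x]. *)
Lemma block_translate (g : Mor C) (x : Obj C) :
  cls A (idm x) = cls A (idm (src g)) -> exists d, cls A d = cls A g /\ src d = x.
Proof.
  intros Hx. destruct Hst as [_ [_ [_ Hinv]]].
  destruct (T_block A (cls A g)) as [tg Htg].
  assert (Hg : pairs C (cls A) tg (cls A g) (idm (src g)) (Tm A g, g)).
  { repeat split; simpl.
    - apply Htg. eauto.
    - now rewrite T_src, To_fixes.
    - apply Hinv. }
  destruct (pairs_transfer Hg Hx) as [[a b] [_ [Hb [Hab Hc]]]]. simpl in *.
  exists b. split; [exact Hb|].
  now rewrite <- (src_comp _ a b Hab), Hc, src_id.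
Qed.

Lemma S0_identity {al : Blk A} {g : Mor C} :
  in_S0 A al -> cls A g = al -> exists y, g = idm y.
Proof.
  destruct Hst as [Hunital _]. intros [x Hx] Hg.
  apply (Hunital x). congruence.
Qed.

Lemma in_SS_iff {al be : Blk A} (si : Blk A) :
  in_S0 A al -> in_S0 A be ->
  in_SS A al be si <->
  (forall f, cls A f = si -> cls A (idm (src f)) = al /\ cls A (idm (tgt f)) = be).
Proof.
  intros Hal Hbe. split.
  - intros [Hright Hleft] f Hf. split.
    + destruct (has_card_one_elim (Hright f Hf)) as [[a b] [[_ [Hb [Hab Hc]]] _]].
      simpl in *. destruct (S0_identity Hal Hb) as [y ->].
      now rewrite <- Hc, (src_comp _ a _ Hab), src_id.
    + destruct (has_card_one_elim (Hleft f Hf)) as [[a b] [[Ha [_ [Hab Hc]]] _]].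
      simpl in *. destruct (S0_identity Hbe Ha) as [y ->].
      now rewrite <- Hc, (tgt_comp _ _ b Hab), tgt_id.
  - intros Hends. split; intros f Hf; destruct (Hends f Hf) as [Hsrc Htgt].
    + apply (@has_card_one_intro _ _ (f, idm (src f))).
      * repeat split; simpl; auto using tgt_id, comp_id_r.
      * intros [a b] [_ [Hb [Hab Hc]]]; simpl in *.
        destruct (S0_identity Hal Hb) as [y ->].
        rewrite tgt_id in Hab. subst y. rewrite comp_id_r in Hc. now subst f.
    + apply (@has_card_one_intro _ _ (idm (tgt f), f)).
      * repeat split; simpl; auto using src_id, comp_id_l.
      * intros [a b] [Ha [_ [Hab Hc]]]; simpl in *.
        destruct (S0_identity Hbe Ha) as [y ->].
        rewrite src_id in Hab. subst y. rewrite comp_id_l in Hc. now subst f.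
Qed.

Lemma pairs_unique (s t : Blk A) (f f' : Mor C) (p q : Mor C * Mor C) :
  pairs C (cls A) s t f p -> pairs C (cls A) s t f' q -> src f = src f' -> p = q.
Proof.
  destruct Hst as [_ [Hthin _]].
  destruct p as [a1 b1], q as [a2 b2].
  intros [Ha1 [Hb1 [H1 E1]]] [Ha2 [Hb2 [H2 E2]]] Hs. simpl in *.
  rewrite <- E1, <- E2, (src_comp _ _ _ H1), (src_comp _ _ _ H2) in Hs.
  assert (b1 = b2) by (apply (Hthin t (src b1)); auto). subst b2.
  assert (a1 = a2) by (apply (Hthin s (tgt b1)); auto). now subst a2.
Qed.

Lemma pconst_one_of_pair (s t : Blk A) (f : Mor C) (p : Mor C * Mor C) :
  pairs C (cls A) s t f p -> pconst A (cls A f) s t 1.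
Proof.
  intros Hp f' Hf'.
  destruct (pairs_transfer Hp Hf') as [q Hq].
  apply (has_card_one_intro Hq). intros y Hy.
  exact (pairs_unique Hy Hq eq_refl).
Qed.

Variables (al be ga si ta : Blk A).
Hypotheses (Hal : in_S0 A al) (Hbe : in_S0 A be) (Hga : in_S0 A ga).
Hypotheses (Hsi : in_SS A al be si) (Hta : in_SS A be ga ta).

Lemma composable_pair_exists :
  exists a h, cls A a = ta /\ cls A h = si /\ src a = tgt h.
Proof.
  destruct (cls_surj A si) as [h Hh].
  destruct (cls_surj A ta) as [g Hg].
  destruct (proj1 (in_SS_iff si Hal Hbe) Hsi h Hh) as [_ Hh_tgt].
  destruct (proj1 (in_SS_iff ta Hbe Hga) Hta g Hg) as [Hg_src _].
  destruct (block_translate g (tgt h)) as [a [Ha Hsa]]; [congruence|].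
  exists a, h. repeat split; congruence.
Qed.

Context {a h : Mor C}.
Hypotheses (Ha : cls A a = ta) (Hh : cls A h = si) (Hah : src a = tgt h).

Let mu := cls A (comp a h).

Lemma composite_pair : pairs C (cls A) ta si (comp a h) (a, h).
Proof. repeat split; auto. Qed.

Lemma composite_in_mu {a' b' : Mor C} :
  cls A a' = ta -> cls A b' = si -> src a' = tgt b' -> cls A (comp a' b') = mu.
Proof.
  intros Ha' Hb' Hab'.
  destruct (proj1 (in_SS_iff si Hal Hbe) Hsi b' Hb') as [Hb'_src _].
  destruct (proj1 (in_SS_iff si Hal Hbe) Hsi h Hh) as [Hh_src _].
  destruct (block_translate (comp a h) (src b')) as [d [Hd Hsd]].
  { now rewrite (src_comp _ _ _ Hah), Hb'_src. }
  destruct (pairs_transfer composite_pair Hd) as [q Hq].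
  assert (Hpair : pairs C (cls A) ta si (comp a' b') (a', b')) by (repeat split; auto).
  assert (Hq_eq : q = (a', b')).
  { apply (pairs_unique Hq Hpair). now rewrite Hsd, (src_comp _ _ _ Hab'). }
  subst q. destruct Hq as [_ [_ [_ Hc]]]. simpl in Hc.
  rewrite Hc. exact Hd.
Qed.

(** [mu] lies in [_alpha S_gamma]: each member factors as [a' o b'] with
    [b'] starting at type [alpha] and [a'] ending at type [gamma]. *)
Lemma mu_in_SS : in_SS A al ga mu.
Proof.
  apply (in_SS_iff _ Hal Hga). intros f Hf.
  destruct (pairs_transfer composite_pair Hf) as [[a' b'] [Ha' [Hb' [Hab' Hc']]]].
  simpl in *. subst f.
  destruct (proj1 (in_SS_iff si Hal Hbe) Hsi b' Hb') as [Hsrc _].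
  destruct (proj1 (in_SS_iff ta Hbe Hga) Hta a' Ha') as [_ Htgt].
  now rewrite (src_comp _ _ _ Hab'), (tgt_comp _ _ _ Hab').
Qed.

Lemma block_with_pair_is_mu {mu' : Blk A} {f : Mor C} {p : Mor C * Mor C} :
  cls A f = mu' -> pairs C (cls A) ta si f p -> mu' = mu.
Proof.
  destruct p as [a' b']. intros Hf [Ha' [Hb' [Hab' Hc']]]. simpl in *.
  subst f. rewrite <- Hf. exact (composite_in_mu Ha' Hb' Hab').
Qed.

End SemiThin.

Theorem lemma4p4 (C : category) (A : assoc_schemoid C) :
  semi_thin A ->
  forall alpha beta gamma : Blk A,
    in_S0 A alpha -> in_S0 A beta -> in_S0 A gamma ->
  forall sigma tau : Blk A,
    in_SS A alpha beta sigma -> in_SS A beta gamma tau ->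
  exists mu : Blk A,
    (in_SS A alpha gamma mu /\ pconst A mu tau sigma 1) /\
    (forall mu', in_SS A alpha gamma mu' /\ pconst A mu' tau sigma 1 -> mu' = mu) /\
    (forall mu' : Blk A, mu' <> mu -> pconst A mu' tau sigma 0).
Proof.
  intros Hst al be ga Hal Hbe Hga si ta Hsi Hta.
  destruct (composable_pair_exists Hst Hal Hbe Hga Hsi Hta)
    as [a [h [Ha [Hh Hah]]]].
  pose proof (composite_pair Ha Hh Hah) as Hpair.
  exists (cls A (comp a h)). split; [split|split].
  - exact (mu_in_SS Hst Hal Hbe Hga Hsi Hta Ha Hh Hah).
  - exact (pconst_one_of_pair Hst Hpair).
  - intros mu' [_ Hone].
    destruct (cls_surj A mu') as [f Hf].
    destruct (has_card_one_elim (Hone f Hf)) as [p [Hp _]].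
    exact (block_with_pair_is_mu Hst Hal Hbe Hsi Ha Hh Hah Hf Hp).
  - intros mu' Hne f Hf. apply has_card_zero_intro. intros p Hp.
    exact (Hne (block_with_pair_is_mu Hst Hal Hbe Hsi Ha Hh Hah Hf Hp)).
Qed.
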